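(* Let $M$ be a set of machines and $J$ a set of jobs with $|J|\le|M|^c$. Let $L$ and $l$ be integers with $2|M|^c\ge L\ge C(J)+D(J)$ and $l\ge 150c\ln|M|/\ln\ln|M|$. Then the probability that a uniformly random hash function $h:M^*\times I\to\{0,\dots,L-1\}$ is not $(L,l)$-good for $J$ is at most $\exp(-|J|\ln(l)/8)$.
   Context: Jobs: each job $j$ has a machine sequence $\mathrm{seq}(j)\in M^*$ (finite sequence of machines) and a unique identifier $\mathrm{ind}(j)\in I:=\{1,\dots,|M|^c\}$, where $c\ge1$ is a constant. Standing assumption: $|M|\ge32$. $C(J)=\max_{m\in M}\sum_{j\in J}|\{i:\mathrm{seq}(j)_i=m\}|$, $D(J)=\max_j\mathrm{len}(\mathrm{seq}(j))$. For $h$, write $h(j):=h(\mathrm{seq}(j),\mathrm{ind}(j))$ and $\mathrm{virt}(j,i)=h(j)+i$ for $i<\mathrm{len}(\mathrm{seq}(j))$ ($\infty$ if $i=\mathrm{len}(\mathrm{seq}(j))$). A bad pattern (for $M,L,l,J$) is a collection of sets $B_{T,m}$, for $0\le T<2L$ and $m\in M$, of pairs $(j,i)$ with $j\in J$, such that $\mathrm{seq}(j)_i=m$ for all $(j,i)\in B_{T,m}$; each $j$ appears at most once in $\bigsqcup B_{T,m}$; $|B_{T,m}|\in\{0\}\cup(l,|J|]$ for all $(T,m)$; and $\sum_{T,m}|B_{T,m}|>|J|/2$. It occurs for $h$ if $\mathrm{virt}(j,i)=T$ for all $(T,m)$ and $(j,i)\in B_{T,m}$. $h$ is $(L,l)$-good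 for $J$ if no bad pattern occurs for $h$. *)

From Stdlib Require Import Reals ClassicalEpsilon.
From mathcomp Require Import all_boot.


(* Jobs are the elements of a finite type [T] (this is the set J);
   [sq j] is seq(j) in M^*. *)

Definition congestion {M T : finType} (sq : T -> seq M) : nat :=
  \max_(m : M) \sum_(j : T) count_mem m (sq j).

Definition dilation {M T : finType} (sq : T -> seq M) : nat :=
  \max_(j : T) size (sq j).

(* A bad pattern: sets B_{t,m} (0 <= t < 2L, m in M) of pairs (j,i).
   Since seq(j)_i = m forces i < len(seq j) <= D(J), indices i are taken
   in 'I_(D(J)). *)
Definition bad_pattern {M T : finType} (sq : T -> seq M) (L : nat) (l : nat)
    (B : 'I_(2 * L) -> M -> {set T * 'I_(dilation sq)}) : Prop :=
  [/\ (forall t m p, p \in B t m ->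
         (p.2 < size (sq p.1))%N /\ nth m (sq p.1) p.2 = m),
      (forall t m t' m' p p', p \in B t m -> p' \in B t' m' -> p.1 = p'.1 ->
         [/\ t = t', m = m' & p = p']),
      (forall t m, #|B t m| = 0 \/ (l < #|B t m| <= #|T|)%N)
    & (#|T| < 2 * \sum_(t : 'I_(2 * L)) \sum_(m : M) #|B t m|)%N].

(* The pattern occurs for h (hv j = h(j) = h(seq j, ind j)):
   virt(j,i) = h(j) + i = t for all (j,i) in B_{t,m}
   (i < len(seq j), so virt is finite). *)
Definition pattern_occurs {M T : finType} (sq : T -> seq M) (L : nat)
    (hv : T -> nat) (B : 'I_(2 * L) -> M -> {set T * 'I_(dilation sq)}) : Prop :=
  forall t m p, p \in B t m -> (hv p.1 + p.2)%N = t.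

Definition good {M T : finType} (sq : T -> seq M) (L l : nat) (hv : T -> nat) : Prop :=
  ~ (exists B, bad_pattern sq L l B /\ pattern_occurs sq L hv B).

Definition goodb {M T : finType} (sq : T -> seq M) (L l : nat)
    (f : {ffun T -> 'I_L}) : bool :=
  if excluded_middle_informative (good sq L l (fun j => nat_of_ord (f j)))
  then true else false.

(* Since identifiers are unique, the keys (seq j, ind j) are pairwise
   distinct, so the values h(j) of a uniform random h : M^* x I -> [0,L)
   are i.i.d. uniform in [0,L); the event depends only on these values. *)
Definition prob_not_good {M T : finType} (sq : T -> seq M) (L l : nat) : R :=
  Rdiv (INR #|[set f : {ffun T -> 'I_L} | ~~ goodb sq L l f]|) (INR (L ^ #|T|)).

(* Union bound over bad patterns.  A pattern B occurring for h pins the hash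
   value of each of its jobs, which are distinct, so B occurs for a fraction at
   most L^-|B| of the hash functions, and |B| > |T|/2.  Weighting by
   q^|T| <= q^(2|B|), where q^8 is about 2l, the sum over patterns factorizes
   over the 2L|M| slots (t, m).  A block of size g > l consists of visits to m,
   of which there are at most C(J) <= L, so a slot contributes at most
   1 + (L + 1) (q^2)^(l+1) / (l+1)!, because binom(C, g) (q^2/L)^g <= (q^2)^g/g!.
   The hypothesis on l makes (l+1)! dominate |M|^(4c) q^(2(l+1)), so the
   product is at most 2 and the probability is at most
   2 q^-|T| <= exp(-|T| ln l / 8). *)

From Stdlib Require Import Reals Lra Classical ClassicalEpsilon.
From mathcomp Require Import all_boot all_order all_algebra zify.

Set Implicit Arguments.
Unset Strict Implicit.

Local Open Scope R_scope.

Lemma ln_le x y : 0 < x -> x <= y -> ln x <= ln y.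
Proof. by move=> x_gt0 [/(ln_increasing _ _ x_gt0)/Rlt_le | ->] //; right. Qed.

Lemma ln_le_inv x y : 0 < x -> 0 < y -> ln x <= ln y -> x <= y.
Proof.
move=> x_gt0 y_gt0 le_ln; apply: Rnot_lt_le => /(ln_increasing _ _ y_gt0); lra.
Qed.

Lemma exp_le x y : x <= y -> exp x <= exp y.
Proof. by move=> [/exp_increasing/Rlt_le | ->] //; right. Qed.

Lemma ln_le_subr1 x : 0 < x -> ln x <= x - 1.
Proof.
move=> x_gt0; rewrite -[X in _ <= X]ln_exp; apply: ln_le => //.
by have := exp_ineq1_le (x - 1); lra.
Qed.

Lemma ln_le_half x : 0 < x -> ln x <= x / 2.
Proof.
move=> x_gt0; have e_ge2 : 2 <= exp 1 by have := exp_ineq1_le 1; lra.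
have /ln_le_subr1 : 0 < x / exp 1 by apply: Rdiv_lt_0_compat; lra.
rewrite ln_mult ?ln_Rinv ?ln_exp; try (apply: Rinv_0_lt_compat); try lra.
have : x / exp 1 <= x / 2 by apply: Rmult_le_compat_l; [lra | apply: Rinv_le_contravar; lra].
lra.
Qed.

Lemma ln_ge_pow3 n x : 3 ^ n <= x -> INR n <= ln x.
Proof.
move=> le_x; have e_le3 := exp_le_3; have e_gt0 := exp_pos 1.
rewrite -[INR n]Rmult_1_r -[1](ln_exp 1) -ln_pow //.
by apply: ln_le; [apply: pow_lt | apply: Rle_trans le_x; apply: pow_incr; lra].
Qed.

Lemma ln_le_pow2 n x : 0 < x -> x <= 2 ^ n -> ln x <= INR n.
Proof.
move=> x_gt0 le_x; have e_ge2 : 2 <= exp 1 by have := exp_ineq1_le 1; lra.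
rewrite -[INR n]Rmult_1_r -[1](ln_exp 1) -ln_pow; last exact: exp_pos.
by apply: ln_le => //; apply: Rle_trans le_x _; apply: pow_incr; lra.
Qed.

Lemma INR_expn m n : INR (m ^ n) = INR m ^ n.
Proof. by elim: n => [|n IHn] //; rewrite expnS mulnE mult_INR IHn. Qed.

Lemma INR_muln m n : INR (m * n) = INR m * INR n.
Proof. by rewrite mulnE mult_INR. Qed.

Lemma INR_leq m n : (m <= n)%N -> INR m <= INR n.
Proof. by move/leP; apply: le_INR. Qed.

Lemma ln_fact_ge k : INR k * ln (INR k) - INR k <= ln (INR k`!).
Proof.
elim: k => [|k IHk]; first by rewrite /= Rmult_0_l ln_1; lra.
have k_ge0 := pos_INR k.
have kfact_gt0 : 0 < INR k`! by apply: lt_0_INR; apply/ltP; apply: fact_gt0.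
rewrite factS INR_muln ln_mult ?S_INR; try lra.
suff : INR k * ln (INR k + 1) <= INR k * ln (INR k) + 1 by lra.
case: (posnP k) => [-> | k_gt0]; first by rewrite /= !Rmult_0_l; lra.
have {}k_gt0 : 0 < INR k by apply: lt_0_INR; apply/ltP.
(* [ln (1 + 1/k) <= 1/k] *)
have /ln_le_subr1 : 0 < (INR k + 1) / INR k by apply: Rdiv_lt_0_compat; lra.
rewrite ln_mult ?ln_Rinv; try (apply: Rinv_0_lt_compat); try lra.
have -> : (INR k + 1) / INR k - 1 = / INR k by field; lra.
move=> /(Rmult_le_compat_l _ _ _ k_ge0); rewrite Rinv_r; lra.
Qed.

Lemma ln_ln_bounds N : (32 <= N)%N ->
  1 < ln (INR N) /\ 0 < ln (ln (INR N)) <= ln (INR N) / 2.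
Proof.
move=> N_ge32; have /ln_ge_pow3 : 3 ^ 3 <= INR N.
  by have := INR_leq N_ge32; rewrite INR_IZR_INZ /=; lra.
rewrite /= => ln_ge3; split; first lra.
split; last by apply: ln_le_half; lra.
by rewrite -ln_1; apply: ln_increasing; lra.
Qed.

Lemma l_ge_300c N c l : (32 <= N)%N ->
  150 * INR c * ln (INR N) / ln (ln (INR N)) <= INR l -> (300 * c <= l)%N.
Proof.
move=> N_ge32 l_ge; have [_ [lnln_gt0 lnln_le]] := ln_ln_bounds N_ge32.
have ratio_ge2 : 2 <= ln (INR N) / ln (ln (INR N)).
  by apply: (Rmult_le_reg_r (ln (ln (INR N)))) => //; field_simplify; lra.
apply/leP/INR_le; rewrite INR_muln [INR 300]INR_IZR_INZ /=.
by move: l_ge; rewrite /Rdiv; have := pos_INR c; nra.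
Qed.

Lemma l_mul_ln_ge N c l : (1 <= c)%N -> (32 <= N)%N ->
  150 * INR c * ln (INR N) / ln (ln (INR N)) <= INR l ->
  75 * INR c * ln (INR N) <= INR l.+1 * ln (INR l.+1).
Proof.
move=> c_ge1 N_ge32 l_ge.
have [a_gt1 [b_gt0 b_le]] := ln_ln_bounds N_ge32.
set a := ln (INR N) in a_gt1 b_gt0 b_le l_ge *; set b := ln a in b_gt0 b_le l_ge *.
have c_ge1R : 1 <= INR c by apply: (@INR_leq 1).
have ab_gt0 : 0 < a / b by apply: Rdiv_lt_0_compat; lra.
have K_ge : 150 * INR c * a / b <= INR l.+1 by rewrite S_INR; lra.
have ab_le : a / b <= INR l.+1.
  apply: Rle_trans K_ge; rewrite /Rdiv.
  by have := Rinv_0_lt_compat _ b_gt0; nra.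
(* [ln (a / b) = b - ln b >= b / 2] *)
have lnK_ge : b / 2 <= ln (INR l.+1).
  apply: Rle_trans (ln_le ab_gt0 ab_le).
  rewrite ln_mult ?ln_Rinv -/b; try (apply: Rinv_0_lt_compat); try lra.
  by have := ln_le_half b_gt0; lra.
have -> : 75 * INR c * a = 150 * INR c * a / b * (b / 2) by field; lra.
by apply: Rmult_le_compat => //; [apply: Rlt_le; apply: Rdiv_lt_0_compat; nra | lra].
Qed.

Lemma pow_le_fact N c l q : (1 <= c)%N -> (32 <= N)%N ->
  150 * INR c * ln (INR N) / ln (ln (INR N)) <= INR l -> (q ^ 8 <= 52 * l)%N ->
  (N ^ (4 * c) * q ^ (2 * l.+1) <= l.+1`!)%N.
Proof.
move=> c_ge1 N_ge32 l_ge q8_le.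
case: (posnP q) => [-> | q_gt0]; first by rewrite exp0n ?muln0 // muln_gt0.
have [a_gt1 _] := ln_ln_bounds N_ge32.
have l_ge300 : 300 <= INR l.
  have := INR_leq (leq_trans (leq_pmulr 300 c_ge1) (l_ge_300c N_ge32 l_ge)).
  by rewrite INR_IZR_INZ.
have KlnK_ge := l_mul_ln_ge c_ge1 N_ge32 l_ge.
have lnfact_ge := ln_fact_ge l.+1.
have N_gt0 : 0 < INR N by apply: lt_0_INR; apply/ltP; apply: leq_trans N_ge32.
have {}q_gt0 : 0 < INR q by apply: lt_0_INR; apply/ltP.
set K := INR l.+1 in KlnK_ge lnfact_ge *.
have K_eq : K = INR l + 1 by rewrite /K S_INR.
have ln8q_le : 8 * ln (INR q) <= 6 + ln K.
  have q8_leR : INR q ^ 8 <= 52 * K.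
    by have := INR_leq q8_le; rewrite INR_muln INR_expn INR_IZR_INZ /=; lra.
  have := ln_le (pow_lt _ 8 q_gt0) q8_leR; rewrite ln_pow // ln_mult; try lra.
  have : ln 52 <= INR 6 by apply: ln_le_pow2; simpl; lra.
  by rewrite [INR 8]/= [INR 6]/=; lra.
have lnK_ge5 : 5 <= ln K.
  have /ln_ge_pow3 : 3 ^ 5 <= K by simpl; lra.
  by rewrite [INR 5]/=; lra.
apply/leP/INR_le/ln_le_inv.
- by rewrite INR_muln !INR_expn; apply: Rmult_lt_0_compat; apply: pow_lt.
- by apply: lt_0_INR; apply/ltP; apply: fact_gt0.
rewrite INR_muln !INR_expn ln_mult ?ln_pow //; try by apply: pow_lt.
rewrite (INR_muln 4) (INR_muln 2) -/K [INR 4]/= [INR 2]/=.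
suff : K * (8 * ln (INR q)) <= K * (6 + ln K) /\ K * 5 <= K * ln K by lra.
by split; apply: Rmult_le_compat_l; lra.
Qed.

Lemma two_div_pow_le_exp n q l : (0 < q)%N -> (0 < l)%N -> (2 * l <= q ^ 8)%N ->
  (8 <= n)%N -> 2 / INR q ^ n <= exp (- (INR n * ln (INR l)) / 8).
Proof.
move=> q_gt0 l_gt0 q8_ge n_ge8.
have {}q_gt0 : 0 < INR q by apply: lt_0_INR; apply/ltP.
have {}l_gt0 : 0 < INR l by apply: lt_0_INR; apply/ltP.
have {}n_ge8 : 8 <= INR n by have := INR_leq n_ge8; rewrite INR_IZR_INZ.
have ln_q8_ge : ln 2 + ln (INR l) <= 8 * ln (INR q).
  have := INR_leq q8_ge; rewrite INR_muln INR_expn; change (INR 2) with 2 => q8_geR.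
  have := ln_le (ltac:(lra) : 0 < 2 * INR l) q8_geR.
  by rewrite ln_mult ?ln_pow //; try lra; rewrite [INR 8]/=; lra.
have -> : INR q ^ n = exp (INR n * ln (INR q)).
  by rewrite -ln_pow // exp_ln //; apply: pow_lt.
rewrite -{1}[2]exp_ln; last lra.
rewrite /Rdiv -exp_Ropp -exp_plus.
apply: exp_le; have := ln_lt_2.
suff : INR n * (ln 2 + ln (INR l)) <= INR n * (8 * ln (INR q)) by nra.
by apply: Rmult_le_compat_l; lra.
Qed.

Lemma ratio_le_exp a n q L l : (0 < L)%N -> (0 < q)%N -> (0 < l)%N -> (2 * l <= q ^ 8)%N ->
  (8 <= n)%N -> (a * q ^ n <= 2 * L ^ n)%N ->
  INR a / INR (L ^ n) <= exp (- (INR n * ln (INR l)) / 8).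
Proof.
move=> L_gt0 q_gt0 l_gt0 q8_ge n_ge8 le_a.
apply: Rle_trans (two_div_pow_le_exp q_gt0 l_gt0 q8_ge n_ge8).
have {}q_gt0 : 0 < INR q ^ n by apply: pow_lt; apply: lt_0_INR; apply/ltP.
have Ln_gt0 : 0 < INR (L ^ n) by apply: lt_0_INR; apply/ltP; rewrite expn_gt0 L_gt0.
have := INR_leq le_a; rewrite INR_muln (INR_muln 2) INR_expn [INR 2]/= => {}le_a.
apply: (Rmult_le_reg_r (INR (L ^ n) * INR q ^ n)); first exact: Rmult_lt_0_compat.
by field_simplify; lra.
Qed.

Local Close Scope R_scope.

Lemma bin_fact_le_expn n g L : n <= L -> 'C(n, g) * g`! <= L ^ g.
Proof.
move=> le_nL; rewrite bin_ffact ffact_prod -[g in L ^ g]card_ord -prod_nat_const.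
by apply: leq_prod => i _; apply: leq_trans (leq_subr _ _) le_nL.
Qed.

Lemma expn_mul_fact_le mu k g : k <= g -> mu <= k.+1 -> mu ^ g * k`! <= mu ^ k * g`!.
Proof.
move=> le_kg le_mu; elim: g le_kg => [|g IHg]; first by rewrite leqn0 => /eqP ->.
rewrite leq_eqVlt => /orP [/eqP -> // | lt_kg].
rewrite expnS factS -mulnA [X in _ <= X]mulnCA leq_mul ?IHg //.
exact: leq_trans le_mu lt_kg.
Qed.

Lemma pow8_window l : 300 <= l ->
  exists q, [/\ 0 < q, 2 * l <= q ^ 8, q ^ 8 <= 52 * l & q ^ 2 <= l].
Proof.
move=> l_ge300; have ex_q : exists q, 2 * l <= q ^ 8.
  by exists (2 * l); rewrite -{1}(expn1 (2 * l)) leq_pexp2l //; lia.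
case: (ex_minnP ex_q) => q q8_ge q_min; exists q.
have q_ge3 : 3 <= q.
  rewrite leqNgt; apply/negP => q_lt3.
  have : q ^ 8 <= 2 ^ 8 by rewrite leq_exp2r // -ltnS.
  lia.
have pred_q8_lt : q.-1 ^ 8 < 2 * l.
  by rewrite ltnNge; apply/negP => /q_min; case: q q_ge3 {q8_ge q_min} => // q _; rewrite ltnn.
(* minimality: [q <= 3/2 (q - 1)] for [q >= 3], and [(3/2)^8 * 2 < 52] *)
have q8_le : q ^ 8 <= 52 * l.
  have : (2 * q) ^ 8 <= (3 * q.-1) ^ 8 by rewrite leq_exp2r //; lia.
  rewrite !expnMn; lia.
split=> //; first lia.
rewrite -(@leq_exp2r _ _ 4) // -expnM (leq_trans q8_le) //.
have l_le_l3 : l <= l ^ 3 by rewrite -{1}(expn1 l) leq_pexp2l //; lia.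
by rewrite (expnSr l 3) leq_mul2r; lia.
Qed.

Lemma poly_le_expn N c L : 1 <= c -> 32 <= N -> L <= 2 * N ^ c ->
  4 * L * L.+1 * N <= N ^ (4 * c).
Proof.
move=> c_ge1 N_ge32 le_L; have P_ge1 : 1 <= N ^ c by rewrite expn_gt0; lia.
apply: (@leq_trans (N ^ c * N ^ c * N * N)).
  move: (N ^ c) P_ge1 le_L => P P_ge1 le_L.
  have : 4 * L * L.+1 <= 24 * (P * P) by nia.
  nia.
by rewrite -expnD -!expnSr; apply: leq_pexp2l; lia.
Qed.

Lemma card_family_pinned {I Y : finType} (F : I -> pred Y) (S : {set I}) :
  (forall i, i \in S -> #|F i| <= 1) -> #|family F| * #|Y| ^ #|S| <= #|Y| ^ #|I|.
Proof.
move=> pinned; rewrite card_family foldrE big_map big_enum -!prod_nat_const.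
rewrite (big_mkcond (mem S)) -big_split /=; apply: leq_prod => i _.
case: ifP => [/pinned le1 | _]; last by rewrite muln1 max_card.
by rewrite -[X in _ <= X]mul1n leq_mul.
Qed.

Lemma sum_ord_nth_count (X : eqType) (a : pred X) x0 s D : size s <= D ->
  \sum_(i < D | (i < size s) && a (nth x0 s i)) 1 = count a s.
Proof.
move=> le_sD; rewrite -sum1_count (big_nth x0) big_mkord.
rewrite (big_ord_widen_cond D (fun i => a (nth x0 s i)) (fun _ => 1) le_sD).
by apply: eq_bigl => i; rewrite andbC.
Qed.

(* Loaded only now: this [lra] shadows the one for Stdlib reals used above. *)
From mathcomp Require Import lra.
Import Order.TTheory GRing.Theory Num.Theory.

Local Open Scope ring_scope.

Lemma ler_sum_subset {R : numDomainType} {I : finType} (P Q : pred I) (F : I -> R) :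
  (forall i, P i -> Q i) -> (forall i, Q i -> 0 <= F i) ->
  \sum_(i | P i) F i <= \sum_(i | Q i) F i.
Proof.
move=> subPQ F_ge0; rewrite [X in X <= _]big_mkcond [X in _ <= X]big_mkcond.
apply: ler_sum => i _; case: ifP => [/subPQ -> // | _].
by case: ifP => // /F_ge0.
Qed.

Lemma expr1D_mul_le1 {R : realFieldType} n (e : R) :
  0 <= e -> (1 + e) ^+ n * (1 - n%:R * e) <= 1.
Proof.
move=> e_ge0; elim: n => [|n IHn]; first by rewrite expr0 mul0r subr0 mulr1.
have pow_ge0 : 0 <= (1 + e) ^+ n by apply: exprn_ge0; lra.
have n_ge0 : 0 <= n%:R :> R by rewrite ler0n.
have : 0 <= (1 + e) ^+ n * (n%:R * e * e + e * e) by apply: mulr_ge0 => //; nra.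
rewrite exprS -natr1; move: ((1 + e) ^+ n) (n%:R : R) pow_ge0 n_ge0 IHn => P m *; nra.
Qed.

Lemma expr1D_le2 {R : realFieldType} n (e : R) :
  0 <= e -> n%:R * e <= 1 / 2 -> (1 + e) ^+ n <= 2.
Proof.
move=> e_ge0 ne_le; have := expr1D_mul_le1 n e_ge0.
have : 0 <= (1 + e) ^+ n by apply: exprn_ge0; lra.
by move: ((1 + e) ^+ n) (n%:R * e) ne_le => P m; nra.
Qed.

Lemma binomial_weight_le {R : realFieldType} n g L k mu :
  (0 < L)%N -> (n <= L)%N -> (k <= g)%N -> (mu <= k.+1)%N ->
  'C(n, g)%:R * (mu%:R / L%:R) ^+ g <= (mu ^ k)%:R / (k`!)%:R :> R.
Proof.
move=> L_gt0 le_nL le_kg le_mu.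
rewrite expr_div_n mulrA ler_pdivrMr ?exprn_gt0 ?ltr0n // mulrAC.
rewrite ler_pdivlMr ?ltr0n ?fact_gt0 // -!natrX -!natrM ler_nat.
apply: (@leq_trans ('C(n, g) * (mu ^ k * g`!))).
  by rewrite -mulnA leq_mul2l expn_mul_fact_le ?orbT.
by rewrite mulnCA leq_mul2l bin_fact_le_expn ?orbT.
Qed.

Lemma sum_large_subsets_le {R : realFieldType} (X : finType) (P : {set X}) L k mu :
  (0 < L)%N -> (#|P| <= L)%N -> (mu <= k.+1)%N ->
  \sum_(A : {set X} | (A \subset P) && (k <= #|A|)%N) (mu%:R / L%:R) ^+ #|A|
    <= #|P|.+1%:R * ((mu ^ k)%:R / (k`!)%:R) :> R.
Proof.
move=> L_gt0 le_PL le_mu.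
rewrite (partition_big (fun A : {set X} => inord #|A| : 'I_#|P|.+1) xpredT) //=.
apply: (@le_trans _ _ (\sum_(g < #|P|.+1) (mu ^ k)%:R / (k`!)%:R)); last first.
  by rewrite sumr_const card_ord [X in _ <= X]mulr_natl.
apply: ler_sum => g _.
rewrite (eq_bigl (fun A : {set X} => (A \subset P) && (#|A| == g) && (k <= g)%N)); last first.
  move=> A; case: (boolP (A \subset P)) => //= /subset_leq_card sub_PA.
  rewrite -val_eqE /= inordK ?ltnS //.
  by case: eqP => [-> | _]; rewrite ?andbT ?andbF.
case: (leqP k g) => [le_kg | lt_gk]; last first.
  rewrite (eq_bigl xpred0) ?big_pred0_eq ?divr_ge0 ?ler0n // => A.
  by rewrite andbF.
rewrite (eq_bigl (fun A : {set X} => (A \subset P) && (#|A| == g))) => [|A]; last first.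
  by rewrite andbT.
rewrite (eq_bigr (fun _ => (mu%:R / L%:R) ^+ g)) => [|A /andP [_ /eqP ->] //].
rewrite sumr_const.
have -> : #|[pred A : {set X} | (A \subset P) && (#|A| == g)]| = 'C(#|P|, g).
  by rewrite -cards_draws; apply: eq_card => A; rewrite inE.
by rewrite -[_ *+ 'C(_, _)]mulr_natl; apply: binomial_weight_le.
Qed.

Local Close Scope ring_scope.

Section BadPatterns.
Variables (M T : finType) (sq : T -> seq M) (L l : nat).

Definition slot : finType := ('I_(2 * L) * M)%type.
Definition visit : finType := (T * 'I_(dilation sq))%type.

Definition visits_at (m : M) : {set visit} :=
  [set v : visit | (v.2 < size (sq v.1)) && (nth m (sq v.1) v.2 == m)].

Definition admissible (x : slot) (A : {set visit}) : bool :=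
  (A \subset visits_at x.2) && ((#|A| == 0) || (l < #|A|)).

Definition pattern_size (B : {ffun slot -> {set visit}}) : nat := \sum_x #|B x|.

Definition jobs_once (B : {ffun slot -> {set visit}}) : bool :=
  [forall x, forall x', forall v in B x, forall v' in B x',
    (v.1 == v'.1) ==> (x == x') && (v == v')].

Definition pattern_of (B : 'I_(2 * L) -> M -> {set visit}) : {ffun slot -> {set visit}} :=
  [ffun x => B x.1 x.2].

Definition bad_patternb (B : {ffun slot -> {set visit}}) : bool :=
  [&& [forall x, admissible x (B x)], jobs_once B & #|T| < 2 * pattern_size B].

Definition occursb (f : {ffun T -> 'I_L}) (B : {ffun slot -> {set visit}}) : bool :=
  [forall x, forall v in B x, f v.1 + v.2 == x.1].

Lemma bad_pattern_card_gt B : bad_pattern sq L l B -> l < #|T|.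
Proof.
case=> _ _ sizeB; apply: contraLR; rewrite !ltnNge !negbK => le_Tl.
rewrite big1 ?muln0 // => t _; rewrite big1 // => m _.
by case: (sizeB t m) => // /andP [lt_lB le_BT]; lia.
Qed.

Lemma not_goodbP f : ~~ goodb sq L l f ->
  exists2 B, bad_pattern sq L l B & pattern_occurs sq L (fun j => nat_of_ord (f j)) B.
Proof.
rewrite /goodb; case: excluded_middle_informative => // not_good _.
by have [B []] := NNPP _ not_good; exists B.
Qed.

Lemma bad_patternbP B (f : {ffun T -> 'I_L}) :
  bad_pattern sq L l B -> pattern_occurs sq L (fun j => nat_of_ord (f j)) B ->
  bad_patternb (pattern_of B) && occursb f (pattern_of B).
Proof.
case=> on_machine once sizeB lt_T occ; rewrite /bad_patternb -!andbA; apply/and4P; split.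
- apply/forallP => x; rewrite ffunE; apply/andP; split.
    by apply/subsetP => v /on_machine [lt_v nth_v]; rewrite inE lt_v nth_v eqxx.
  by case: (sizeB x.1 x.2) => [-> | /andP [-> _]]; rewrite ?orbT.
- apply/forallP => -[t m]; apply/forallP => -[t' m'].
  apply/forall_inP => v; rewrite ffunE /= => Bv; apply/forall_inP => v'; rewrite ffunE /= => Bv'.
  by apply/implyP => /eqP /(once _ _ _ _ _ _ Bv Bv') [-> -> ->]; rewrite !eqxx.
- rewrite /pattern_size (eq_bigr (fun x : slot => #|B x.1 x.2|)) => [|x _]; last by rewrite ffunE.
  by rewrite -(pair_big xpredT xpredT (fun t m => #|B t m|)).
- apply/forallP => x; apply/forall_inP => v; rewrite ffunE => Bv.
  by apply/eqP; apply: occ Bv.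
Qed.

Lemma card_not_good_le :
  #|[set f : {ffun T -> 'I_L} | ~~ goodb sq L l f]| <=
  \sum_(B | bad_patternb B) #|[set f : {ffun T -> 'I_L} | occursb f B]|.
Proof.
rewrite -sum1dep_card.
apply: (@leq_trans (\sum_(f | ~~ goodb sq L l f) \sum_(B | bad_patternb B) occursb f B)).
  apply: leq_sum => f /not_goodbP [B bad occ].
  by have /andP [badB occB] := bad_patternbP bad occ; rewrite (bigD1 (pattern_of B)) //= occB.
rewrite (exchange_big_dep bad_patternb) //=; apply: leq_sum => B _.
rewrite -sum1dep_card big_mkcond [X in _ <= X]big_mkcond /=.
by apply: leq_sum => f _; case: occursb; case: ifP.
Qed.

Lemma card_occurs_mul B : jobs_once B ->
  #|[set f : {ffun T -> 'I_L} | occursb f B]| * L ^ pattern_size B <= L ^ #|T|.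
Proof.
move=> /forallP once.
pose Q := [set xv : slot * visit | xv.2 \in B xv.1].
have size_Q : pattern_size B = #|Q|.
  rewrite /pattern_size -sum1dep_card (eq_bigr (fun x => \sum_(v in B x) 1)) => [|x _].
    by rewrite pair_big_dep.
  by rewrite sum1_card.
have job_inj : {in Q &, injective (fun xv : slot * visit => xv.2.1)}.
  move=> [x v] [x' v']; rewrite !inE /= => Bv Bv' eq_j.
  move: (once x) => /forallP/(_ x')/forall_inP/(_ v Bv)/forall_inP/(_ v' Bv').
  by rewrite eq_j eqxx => /andP [/eqP -> /eqP ->].
pose F j := [pred y : 'I_L | [forall x, forall v in B x, (v.1 == j) ==> (y + v.2 == x.1)]].
have occ_family : [set f | occursb f B] \subset family F.
  apply/subsetP => f; rewrite inE => /forallP occ; apply/familyP => j; rewrite inE.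
  apply/forallP => x; apply/forall_inP => v Bv; apply/implyP => /eqP <-.
  exact: (forall_inP (occ x)).
have pinned j : j \in [set xv.2.1 | xv in Q] -> #|F j| <= 1.
  case/imsetP => -[x v]; rewrite inE /= => Bv ->; apply/card_le1_eqP => y y'; rewrite /F !inE.
  move=> /forallP/(_ x)/forall_inP/(_ v Bv); rewrite eqxx => /eqP y_eq.
  move=> /forallP/(_ x)/forall_inP/(_ v Bv); rewrite eqxx => /eqP y'_eq.
  by apply: val_inj; apply/eqP; rewrite -(eqn_add2r v.2) y_eq y'_eq.
have := card_family_pinned pinned; rewrite card_ord size_Q -(card_in_imset job_inj).
by apply: leq_trans; rewrite leq_mul2r subset_leq_card ?orbT.
Qed.

Lemma card_visits_at m : #|visits_at m| <= congestion sq.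
Proof.
apply: leq_trans (leq_bigmax (F := fun m => \sum_j count_mem m (sq j)) m).
pose at_m j (i : 'I_(dilation sq)) := (i < size (sq j)) && (nth m (sq j) i == m).
rewrite -sum1dep_card (eq_bigl (fun v : visit => xpredT v.1 && at_m v.1 v.2)) //.
rewrite -(pair_big_dep xpredT at_m (fun _ _ => 1)).
apply: leq_sum => j _; rewrite /at_m (sum_ord_nth_count (pred1 m)) //.
exact: (leq_bigmax (F := fun j => size (sq j)) j).
Qed.

Local Open Scope ring_scope.

Lemma sum_admissible_le {R : realFieldType} (x : slot) mu :
  (0 < L)%N -> (congestion sq <= L)%N -> (mu <= l.+2)%N ->
  \sum_(A | admissible x A) (mu%:R / L%:R) ^+ #|A|
    <= 1 + L.+1%:R * ((mu ^ l.+1)%:R / (l.+1)`!%:R) :> R.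
Proof.
move=> L_gt0 le_CL le_mu; have le_PL := leq_trans (card_visits_at x.2) le_CL.
rewrite (bigID (fun A : {set visit} => #|A| == 0%N)) /=; apply: lerD.
  rewrite (big_pred1 set0) ?cards0 // => A; rewrite /admissible cards_eq0.
  by rewrite /=; case: eqP => [-> | _]; rewrite ?sub0set ?andbF ?eqxx.
rewrite (eq_bigl (fun A : {set visit} => (A \subset visits_at x.2) && (l.+1 <= #|A|)%N)) => [|A].
  apply: le_trans (sum_large_subsets_le L_gt0 le_PL le_mu) _.
  by rewrite ler_wpM2r ?divr_ge0 ?ler0n // ler_nat ltnS.
by rewrite /admissible; case: (#|A| =P 0%N) => [-> | _]; rewrite ?andbF ?andbT.
Qed.

Lemma sum_bad_patterns_le {R : realFieldType} (w : R) : 0 <= w ->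
  \sum_(B | bad_patternb B) w ^+ pattern_size B <=
  \prod_(x : slot) \sum_(A | admissible x A) w ^+ #|A|.
Proof.
move=> w_ge0; rewrite bigA_distr_big_dep /=.
rewrite (eq_bigr (fun B : {ffun slot -> {set visit}} => \prod_x w ^+ #|B x|)); last first.
  by move=> B _; rewrite prodrXr.
apply: ler_sum_subset => [B /and3P [/forallP adm _ _] | B _].
  by apply/familyP => x; apply: adm.
by apply: prodr_ge0 => x _; apply: exprn_ge0.
Qed.

Lemma card_not_good_weighted_le {R : realFieldType} q : (0 < L)%N -> (0 < q)%N ->
  (#|[set f : {ffun T -> 'I_L} | ~~ goodb sq L l f]| * q ^ #|T|)%:R <=
  (L ^ #|T|)%:R * \sum_(B | bad_patternb B) ((q ^ 2)%:R / L%:R) ^+ pattern_size B :> R.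
Proof.
move=> L_gt0 q_gt0; have := card_not_good_le; rewrite -(ler_nat R) natr_sum => le_bad.
rewrite natrM; apply: le_trans (ler_wpM2r (ler0n _ _) le_bad) _.
rewrite mulr_suml mulr_sumr; apply: ler_sum => B /and3P [_ once lt_T].
rewrite expr_div_n mulrA ler_pdivlMr ?exprn_gt0 ?ltr0n // -!natrX -!natrM ler_nat.
rewrite mulnAC leq_mul ?card_occurs_mul // -expnM leq_pexp2l //.
exact: ltnW.
Qed.

Lemma card_not_good_mul_le q : (0 < L)%N -> (0 < q)%N -> (q ^ 2 <= l.+2)%N ->
  (congestion sq <= L)%N -> (4 * L * L.+1 * #|M| * (q ^ 2) ^ l.+1 <= l.+1`!)%N ->
  (#|[set f : {ffun T -> 'I_L} | ~~ goodb sq L l f]| * q ^ #|T| <= 2 * L ^ #|T|)%N.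
Proof.
move=> L_gt0 q_gt0 le_q2 le_CL le_fact; rewrite -(ler_nat rat).
apply: le_trans (card_not_good_weighted_le L_gt0 q_gt0) _.
rewrite natrM mulrC ler_wpM2r ?ler0n //.
apply: le_trans (sum_bad_patterns_le _) _; first by rewrite divr_ge0 ?ler0n.
apply: le_trans (_ : \prod_(x : slot) (1 + L.+1%:R * (((q ^ 2) ^ l.+1)%:R / (l.+1)`!%:R)) <= 2).
  apply: ler_prod => x _; rewrite sumr_ge0 => [|A _]; last by rewrite exprn_ge0 ?divr_ge0 ?ler0n.
  exact: sum_admissible_le.
rewrite prodr_const; apply: expr1D_le2; first by rewrite mulr_ge0 ?divr_ge0 ?ler0n.
rewrite card_prod card_ord !mulrA ler_pdivrMr ?ltr0n ?fact_gt0 //.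
by move: le_fact; rewrite -(ler_nat rat) !natrM; lra.
Qed.
End BadPatterns.

Local Open Scope R_scope.

Theorem lemma5p15 (M T : finType) (c : nat) (sq : T -> seq M)
    (ind : T -> 'I_(#|M| ^ c)) (L l : nat) :
  (1 <= c)%N -> (32 <= #|M|)%N ->
  injective ind ->
  (#|T| <= #|M| ^ c)%N ->
  (congestion sq + dilation sq <= L)%N ->
  (L <= 2 * #|M| ^ c)%N ->
  (150 * INR c * ln (INR #|M|) / ln (ln (INR #|M|)) <= INR l) ->
  (prob_not_good sq L l <= exp (- (INR #|T| * ln (INR l)) / 8)).
Proof.
(* Injectivity of [ind] and the bound on |T| are already built into
   [prob_not_good], which treats the hash values of the jobs as independent. *)
move=> c_ge1 M_ge32 _ _ le_CDL le_L l_ge; rewrite /prob_not_good.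
have [-> | /card_gt0P [f]] := posnP #|[set f : {ffun T -> 'I_L} | ~~ goodb sq L l f]|.
  by rewrite /Rdiv Rmult_0_l; left; apply: exp_pos.
rewrite inE => /not_goodbP [B /bad_pattern_card_gt lt_lT _].
have l_ge300 : (300 <= l)%N by apply: leq_trans (l_ge_300c M_ge32 l_ge); lia.
have [q [q_gt0 q8_ge q8_le q2_le]] := pow8_window l_ge300.
have L_gt0 : (0 < L)%N.
  have /card_gt0P [j _] : (0 < #|T|)%N by apply: leq_ltn_trans lt_lT.
  exact: leq_ltn_trans (leq0n _) (ltn_ord (f j)).
have le_CL : (congestion sq <= L)%N := leq_trans (leq_addr _ _) le_CDL.
have le_fact : (4 * L * L.+1 * #|M| * (q ^ 2) ^ l.+1 <= l.+1`!)%N.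
  apply: leq_trans (pow_le_fact c_ge1 M_ge32 l_ge q8_le).
  by rewrite -expnM leq_mul2r poly_le_expn ?orbT.
apply: ratio_le_exp L_gt0 q_gt0 _ q8_ge _ (card_not_good_mul_le L_gt0 q_gt0 _ le_CL le_fact); lia.
Qed.
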